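(* Let $n\ge 1$, $\bar\gamma=(\gamma_1,\dots,\gamma_n)\in\mathbb{N}^n$, and let $s_1,\dots,s_n$ be i.i.d. with $\Pr[s_i=k]=2^{-(k+1)}$ for $k\ge 0$; let $A(\bar\gamma)$ be the event that the closed intervals $[s_i,s_i+\gamma_i]$ are pairwise disjoint. Then $$\Pr[A(\bar\gamma)]=c(n)\cdot 2^{-\binom{n+1}{2}}\sum_{\sigma\in\mathrm{Sym}_n}\prod_{i=1}^{n-1}2^{-(n-i)\gamma_{\sigma(i)}},$$ where $c(n)=2\big/\prod_{i=1}^{n-1}(1-2^{-(n+1-i)})$ satisfies $c(n)\in[2,4]$ for all $n$, and $c(2)=8/3$.
   Context: $\mathbb{N}=\{0,1,2,\dots\}$; $\mathrm{Sym}_n$ is the set of all permutations of $\{1,\dots,n\}$. *)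

From HB Require Import structures.
From mathcomp Require Import all_boot all_order all_algebra all_fingroup.
Set Implicit Arguments. Unset Strict Implicit. Unset Printing Implicit Defensive.
Import Order.TTheory GRing.Theory Num.Theory.
Local Open Scope ring_scope.

Definition converges_to (u : nat -> rat) (l : rat) : Prop :=
  forall eps : rat, 0 < eps ->
    exists N : nat, forall M : nat, (N <= M)%N -> `|u M - l| < eps.

Definition intervals_disjoint (n : nat) (gamma : 'I_n -> nat) (s : 'I_n -> nat) : bool :=
  [forall i : 'I_n, forall j : 'I_n,
     (i != j) ==> ((s i + gamma i < s j)%N || (s j + gamma j < s i)%N)].

Definition mass (n : nat) (s : 'I_n -> nat) : rat :=
  \prod_(i : 'I_n) (2%:R : rat) ^- (s i).+1.

(* Partial sum of Pr[A(gamma)] over outcomes with all s_i < N.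
   Pr[A(gamma)] is the limit of these partial sums as N -> infinity. *)
Definition probA_partial (n : nat) (gamma : 'I_n -> nat) (N : nat) : rat :=
  \sum_(s : {ffun 'I_n -> 'I_N} | intervals_disjoint gamma (fun i => nat_of_ord (s i)))
     mass (fun i => nat_of_ord (s i)).

Definition c (n : nat) : rat :=
  2%:R / \prod_(1 <= i < n) (1 - (2%:R : rat) ^- (n.+1 - i)).

From HB Require Import structures.
From mathcomp Require Import all_boot all_order all_algebra all_fingroup.
From mathcomp Require Import zify ring lra.
Set Implicit Arguments. Unset Strict Implicit. Unset Printing Implicit Defensive.
Import Order.TTheory GRing.Theory Num.Theory.
Local Open Scope ring_scope.

(* A disjoint configuration is determined by the left-to-right order sigma of
   the intervals and by the gaps e_0, ..., e_{n-1} >= 0 (e_0 is the position of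
   the leftmost interval, e_k the free space in front of the k-th one): the
   k-th interval starts at sum_{j <= k} e_j + sum_{j < k} (gamma_{sigma j} + 1).
   Summing these starting points, the mass 2^{-sum_i (s_i + 1)} factors as
   2^{-C(n+1,2) - sum_j (n-1-j) gamma_{sigma j}} * prod_j (2^{-(n-j)})^{e_j},
   so summing over the gaps gives a product of geometric series, and
   prod_j 1/(1 - 2^{-(n-j)}) = c(n).  The truncation to positions s_i <= K is
   squeezed between the sums over gaps < B (for K >= n (B + max gamma + 1)) and
   over gaps <= K, whose distance to the limit is O(n 2^{-B}).  The bounds on
   c(n) come from 1 - prod_i (1 - a_i) <= sum_i a_i. *)

Lemma sum_prefix_sums (F : nat -> nat) n :
  (\sum_(k < n) \sum_(j < k) F j = \sum_(j < n) (n - j.+1) * F j)%N.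
Proof.
elim: n => [|n IH]; first by rewrite !big_ord0.
rewrite big_ord_recr /= IH [RHS]big_ord_recr /= subnn mul0n addn0 -big_split /=.
by apply: eq_bigr => j _; rewrite subSS -[(n - j)%N](subnSK (ltn_ord j)) mulSn addnC.
Qed.

Lemma sum_subn_ord n : (\sum_(j < n) (n - j.+1) = 'C(n, 2))%N.
Proof.
rewrite (reindex_inj rev_ord_inj) /= -bin2_sum big_mkord.
by apply: eq_bigr => j _; rewrite subnS subKn // -ltnS.
Qed.

Lemma card_ord_lt n k : (k <= n)%N -> #|[set i : 'I_n | (i < k)%N]| = k.
Proof.
move=> kn; rewrite -sum1_card (eq_bigl (fun i : 'I_n => true && (i < k)%N)) => [|i].
  by rewrite (big_ord_narrow_cond kn) sum1_card card_ord.
by rewrite inE.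
Qed.

Lemma ler_sum_subpred (I : finType) (R : numDomainType) (P Q : pred I) (F : I -> R) :
  subpred P Q -> (forall i, Q i -> 0 <= F i) ->
  \sum_(i | P i) F i <= \sum_(i | Q i) F i.
Proof.
move=> PQ F_ge0; rewrite [X in _ <= X](bigID P) /= (eq_bigl P) => [|i].
  by rewrite lerDl sumr_ge0 // => i /andP [/F_ge0].
by apply/andP/idP => [[]//|Pi]; rewrite PQ.
Qed.

Lemma one_sub_prod_le_sum (R : numDomainType) (I : Type) (s : seq I) (a : I -> R) :
  (forall i, 0 <= a i <= 1) -> 1 - \prod_(i <- s) (1 - a i) <= \sum_(i <- s) a i.
Proof.
move=> a01; elim: s => [|x s IH]; first by rewrite !big_nil subrr.
rewrite !big_cons; set P := \prod_(i <- s) (1 - a i).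
have [ax_ge0 ax_le1] := andP (a01 x).
have P_le1 : P <= 1.
  by apply: prodr_ile1 => i _; have /andP [a0 a1] := a01 i; rewrite subr_ge0 a1 gerBl a0.
have -> : 1 - (1 - a x) * P = a x * P + (1 - P) by rewrite mulrBl mul1r opprB addrCA.
by apply: lerD => //; rewrite ler_piMr.
Qed.

Lemma geometric_sum (R : fieldType) (x : R) B :
  x != 1 -> \sum_(t < B) x ^+ t = (1 - x ^+ B) / (1 - x).
Proof.
move=> x_neq1; have x1 : 1 - x != 0 by rewrite subr_eq0 eq_sym.
by apply: (mulfI x1); rewrite [RHS]mulrC divfK // -opprB mulNr -subrX1 opprB.
Qed.

Lemma converges_to_squeeze (u : nat -> rat) (l C : rat) :
  (forall B, (0 < B)%N -> exists N, forall K, (N <= K)%N -> l - C / B%:R <= u K <= l) ->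
  converges_to u l.
Proof.
move=> squeeze eps eps_gt0; pose B := Num.bound (`|C| / eps).
have CB : `|C| / eps < B%:R by rewrite archi_boundP // divr_ge0 // ltW.
have B_gt0 : (0 < B)%N by rewrite /B /Num.bound.
have [N uN] := squeeze B B_gt0; exists N => K /uN /andP [lo hi].
have C_B_lt : C / B%:R < eps.
  rewrite ltr_pdivrMr ?ltr0n // mulrC -ltr_pdivrMr //.
  by apply: le_lt_trans CB; rewrite ler_wpM2r ?invr_ge0 ?ler_norm // ltW.
rewrite ler0_norm ?subr_le0 // opprB; apply: le_lt_trans C_B_lt.
by rewrite lerBlDr -lerBlDl.
Qed.

Section Placement.

Variables e w : nat -> nat.

Definition start k := (\sum_(j < k.+1) e j + \sum_(j < k) (w j).+1)%N.

Lemma start0 : start 0 = e 0.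
Proof. by rewrite /start big_ord1 big_ord0 addn0. Qed.

Lemma startS k : start k.+1 = (start k + (w k).+1 + e k.+1)%N.
Proof. rewrite /start !big_ord_recr /=; lia. Qed.

Lemma start_sep k l : (k < l)%N -> (start k + (w k).+1 <= start l)%N.
Proof.
elim: l => // l IH; rewrite ltnS leq_eqVlt => /predU1P [-> | /IH kl].
  by rewrite startS leq_addr.
by rewrite startS; lia.
Qed.

Lemma ltn_start : {mono start : k l / (k < l)%N}.
Proof.
move=> k l; case: (ltngtP k l) => [kl | lk | <-]; last exact: ltnn.
- by apply: leq_trans (start_sep kl); rewrite addnS ltnS leq_addr.
- apply/negbTE; rewrite -leqNgt; apply: leq_trans (start_sep lk).
  by rewrite addnS leqW // leq_addr.
Qed.

Lemma start_le b g k :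
  (forall j, e j <= b)%N -> (forall j, w j <= g)%N -> (start k <= k.+1 * b + k * g.+1)%N.
Proof.
have sum_le (F : nat -> nat) c l : (forall j, F j <= c)%N -> (\sum_(j < l) F j <= l * c)%N.
  move=> Fc; apply: (@leq_trans (\sum_(j < l) c)%N); first by apply: leq_sum => j _.
  by rewrite big_const_ord iter_addn_0 mulnC.
by move=> eb wg; apply: leq_add; [apply: (sum_le e) | apply: (sum_le (fun j => (w j).+1))].
Qed.

Lemma sum_start n :
  (\sum_(k < n) (start k).+1
    = n + \sum_(j < n) (n - j) * e j + \sum_(j < n) (n - j.+1) * (w j).+1)%N.
Proof.
rewrite -(sum_prefix_sums (fun j => (w j).+1)).
have -> : (\sum_(j < n) (n - j) * e j = \sum_(k < n) \sum_(j < k.+1) e j)%N.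
  have := sum_prefix_sums e n.+1.
  by rewrite big_ord_recl big_ord0 add0n big_ord_recr /= subnn mul0n addn0.
under eq_bigr => k _ do rewrite /start -add1n.
by rewrite !big_split /= sum1_card card_ord addnA.
Qed.

End Placement.

Definition gaps (w t : nat -> nat) k :=
  (t k - (if k is k'.+1 then t k' + (w k').+1 else 0))%N.

Lemma gaps_le w t k : (gaps w t k <= t k)%N.
Proof. exact: leq_subr. Qed.

Lemma start_gaps w t e n :
  (forall k, k.+1 < n -> t k + (w k).+1 <= t k.+1)%N ->
  (forall k, k < n -> e k = gaps w t k)%N ->
  forall k, (k < n)%N -> start e w k = t k.
Proof.
move=> sep eE; elim=> [|k IH] kn; first by rewrite start0 eE // /gaps subn0.
by rewrite startS IH ?(ltnW kn) // eE // /gaps subnKC // sep.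
Qed.

Section Sorting.

Variables (n : nat) (s : 'I_n -> nat).

Definition rank i := #|[set j | (s j < s i)%N]|.

Lemma rank_lt i : (rank i < n)%N.
Proof.
rewrite -[n]card_ord -cardsT; apply/proper_card/properP; split; first exact: subsetT.
by exists i; rewrite ?inE ?ltnn.
Qed.

Lemma rank_homo i j : (s i < s j)%N -> (rank i < rank j)%N.
Proof.
move=> ij; apply/proper_card/properP; split; last by exists i; rewrite !inE ?ltnn.
by apply/subsetP => k; rewrite !inE => /ltn_trans; apply.
Qed.

Lemma rank_sorting (sg : 'S_n) : {homo s \o sg : k l / (k < l)%N} ->
  forall i, rank i = sg^-1%g i.
Proof.
move=> sorted i; rewrite /rank.
have -> : [set j | (s j < s i)%N] = sg^-1%g @^-1: [set k : 'I_n | (k < sg^-1%g i)%N].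
  apply/setP => j; rewrite !inE.
  case: (ltngtP (sg^-1%g j) (sg^-1%g i)) => [lt | gt | eq].
  - by have := sorted _ _ lt; rewrite /= !permKV.
  - by have := sorted _ _ gt; rewrite /= !permKV => /ltnW; rewrite leqNgt => /negbTE.
  - by move/val_inj/perm_inj: eq => ->; rewrite ltnn.
by rewrite card_preimset ?card_ord_lt 1?ltnW //; apply: perm_inj.
Qed.

Lemma exists_sorting_perm : injective s ->
  exists sg : 'S_n, {homo s \o sg : k l / (k < l)%N}.
Proof.
move=> s_inj; pose rk i : 'I_n := Ordinal (rank_lt i).
have rk_inj : injective rk.
  move=> i j /(congr1 val) /= rij; apply: s_inj.
  by case: (ltngtP (s i) (s j)) => // /rank_homo; rewrite rij ltnn.
exists (perm rk_inj)^-1%g => k l kl /=.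
set i := (perm rk_inj)^-1%g k; set j := (perm rk_inj)^-1%g l.
have rkE x : rank ((perm rk_inj)^-1%g x) = x.
  by have := permKV (perm rk_inj) x; rewrite permE => /(congr1 val).
case: (ltngtP (s i) (s j)) => // [/rank_homo | sij].
  by rewrite !rkE ltnNge (ltnW kl).
by move: kl; rewrite -(rkE k) -(rkE l) -/i -/j (s_inj _ _ sij) ltnn.
Qed.

Lemma sorting_perm_unique (sg tau : 'S_n) :
  {homo s \o sg : k l / (k < l)%N} -> {homo s \o tau : k l / (k < l)%N} -> sg = tau.
Proof.
move=> /rank_sorting sg_rank /rank_sorting tau_rank.
by apply/invg_inj/permP => i; apply: val_inj; rewrite /= -sg_rank -tau_rank.
Qed.

End Sorting.

Section Disjoint.

Variables (n : nat) (gamma : 'I_n -> nat).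

Lemma eq_intervals_disjoint {s t : 'I_n -> nat} :
  s =1 t -> intervals_disjoint gamma s = intervals_disjoint gamma t.
Proof. by move=> st; apply: eq_forallb => i; apply: eq_forallb => j; rewrite !st. Qed.

Variables (s : 'I_n -> nat).
Hypothesis disj : intervals_disjoint gamma s.

Lemma intervals_disjointP i j :
  i != j -> (s i + gamma i < s j)%N || (s j + gamma j < s i)%N.
Proof. by move: disj => /forallP /(_ i) /forallP /(_ j) /implyP. Qed.

Lemma intervals_disjoint_inj : injective s.
Proof.
move=> i j sij; apply/eqP; apply: contraT => /intervals_disjointP.
by rewrite sij !ltnNge !leq_addr.
Qed.

Lemma intervals_disjoint_sorted_sep (sg : 'S_n) :
  {homo s \o sg : k l / (k < l)%N} ->
  forall k l : 'I_n, (k < l)%N -> (s (sg k) + gamma (sg k) < s (sg l))%N.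
Proof.
move=> sorted k l kl; have /intervals_disjointP : sg k != sg l.
  by rewrite (inj_eq perm_inj); apply: contraTneq kl => ->; rewrite ltnn.
by case/orP=> // /(leq_ltn_trans (leq_addr _ _)); rewrite ltnNge ltnW // sorted.
Qed.

End Disjoint.

Lemma mass_ge0 n (s : 'I_n -> nat) : 0 <= mass s.
Proof. by apply: prodr_ge0 => i _; rewrite invr_ge0 exprn_ge0. Qed.

Lemma eq_mass n (s t : 'I_n -> nat) : s =1 t -> mass s = mass t.
Proof. by move=> st; apply: eq_bigr => i _; rewrite st. Qed.

Local Notation half := (2%:R^-1 : rat).

Lemma half_gt0 : 0 < half.
Proof. by rewrite invr_gt0 ltr0n. Qed.

Lemma half_lt1 : half < 1.
Proof. by rewrite invf_lt1 ?ltr0n // ltr1n. Qed.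

Lemma half_expn_le B : (0 < B)%N -> half ^+ B <= B%:R^-1.
Proof.
move=> B_gt0; rewrite exprVn lef_pV2 ?posrE ?ltr0n ?exprn_gt0 //.
by rewrite -natrX ler_nat ltnW // ltn_expl.
Qed.

Section Configurations.

Variables (m : nat) (gamma : 'I_m.+1 -> nat).
Local Notation n := m.+1.

Definition sorted_len (sg : 'S_n) k := gamma (sg (inord k)).

(* [sg k] is the k-th interval from the left and [e k] the gap in front of it. *)
Definition place (sg : 'S_n) (e : 'I_n -> nat) (i : 'I_n) : nat :=
  start (fun k => e (inord k)) (sorted_len sg) (sg^-1%g i).

Lemma sorted_len_perm sg (k : 'I_n) : sorted_len sg k = gamma (sg k).
Proof. by rewrite /sorted_len inord_val. Qed.

Lemma place_perm sg e (k : 'I_n) :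
  place sg e (sg k) = start (fun k => e (inord k)) (sorted_len sg) k.
Proof. by rewrite /place permK. Qed.

Lemma place_sorted sg e : {homo place sg e \o sg : k l / (k < l)%N}.
Proof. by move=> k l; rewrite /= !place_perm ltn_start. Qed.

Lemma place_disjoint sg e : intervals_disjoint gamma (place sg e).
Proof.
apply/forallP => i; apply/forallP => j; apply/implyP => ij.
rewrite -[i](permKV sg) -[j](permKV sg) !place_perm.
have : (sg^-1 i != sg^-1 j)%g by rewrite (inj_eq perm_inj).
rewrite neq_ltn => /orP [] /(start_sep (fun k => e (inord k)) (sorted_len sg)).
  by rewrite sorted_len_perm addnS => ->.
by rewrite sorted_len_perm addnS => ->; rewrite orbT.
Qed.

Definition sorted_gaps (s : 'I_n -> nat) (sg : 'S_n) (j : 'I_n) : nat :=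
  gaps (sorted_len sg) (fun k => s (sg (inord k))) j.

Lemma sorted_gaps_le (s : 'I_n -> nat) (sg : 'S_n) j :
  (sorted_gaps s sg j <= s (sg j))%N.
Proof. by rewrite -{2}[j]inord_val; apply: gaps_le. Qed.

Lemma place_sorted_gaps (s : 'I_n -> nat) (sg : 'S_n) e :
  intervals_disjoint gamma s -> {homo s \o sg : k l / (k < l)%N} ->
  e =1 sorted_gaps s sg -> place sg e =1 s.
Proof.
move=> disj sorted eE i; rewrite -[i](permKV sg) place_perm.
rewrite (start_gaps (t := fun k => s (sg (inord k))) (n := n)) ?inord_val //.
- move=> k kn; rewrite /sorted_len addnS.
  by apply: intervals_disjoint_sorted_sep; rewrite // !inordK // ltnW.
- by move=> k kn; rewrite eE /sorted_gaps inordK.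
Qed.

Lemma sorted_gaps_place sg e : sorted_gaps (place sg e) sg =1 e.
Proof.
case=> [[|k] kn]; rewrite /sorted_gaps /gaps /= !place_perm.
  by rewrite inordK // start0 subn0; congr e; apply: val_inj; rewrite /= inordK.
rewrite (inordK kn) (inordK (ltnW kn)) startS addKn.
by congr e; apply: val_inj; rewrite /= inordK.
Qed.

Lemma place_inj sg tau e f : place sg e =1 place tau f -> sg = tau /\ e =1 f.
Proof.
move=> E; have sg_tau : sg = tau.
  apply: (sorting_perm_unique (place_sorted sg e)) => k l kl.
  by rewrite /= !E; apply: place_sorted.
split=> // j; subst tau.
rewrite -(sorted_gaps_place sg e) -(sorted_gaps_place sg f) /sorted_gaps /gaps.
by case: (nat_of_ord j) => [|k]; rewrite !E.
Qed.

Definition weight (sg : 'S_n) : rat :=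
  half ^+ ('C(n.+1, 2) + \sum_(j < n) (m - j) * gamma (sg j)).

Definition ratio (j : 'I_n) : rat := half ^+ (n - j).

Lemma mass_place sg e : mass (place sg e) = weight sg * \prod_j ratio j ^+ e j.
Proof.
rewrite /mass (reindex_inj (@perm_inj _ sg)) /=.
under eq_bigr => k _ do rewrite place_perm -exprVn.
under [X in _ = _ * X]eq_bigr => j _ do rewrite /ratio -exprM.
rewrite !prodrXr -exprD sum_start; congr (_ ^+ _).
have -> : (\sum_(j < n) (n - j) * e (inord j) = \sum_(j < n) (n - j) * e j)%N.
  by apply: eq_bigr => j _; rewrite inord_val.
have -> : (\sum_(j < n) (n - j.+1) * (sorted_len sg j).+1
           = \sum_(j < n) (m - j) * gamma (sg j) + 'C(n, 2))%N.
  rewrite -sum_subn_ord -big_split; apply: eq_bigr => j _.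
  by rewrite sorted_len_perm mulnSr subSS.
rewrite (binS n 1) bin1 addnAC [(_ + 'C(n, 2))%N]addnC addnA [(n + _)%N]addnC.
by congr (_ + _)%N; apply: eq_bigr.
Qed.

Definition placement {B} (x : 'S_n * {ffun 'I_n -> 'I_B}) : 'I_n -> nat :=
  place x.1 (fun j => x.2 j).

Lemma placement_le B (x : 'S_n * {ffun 'I_n -> 'I_B}) i :
  (placement x i <= n * (B + (\max_(i < n) gamma i).+1))%N.
Proof.
set G := (\max_(i < n) gamma i)%N.
have le_start := @start_le (fun k => x.2 (inord k)) (sorted_len x.1) B G (x.1^-1 i)%g.
rewrite /placement /place mulnDr; apply: leq_trans (le_start _ _) _.
- by move=> j; apply: ltnW.
- by move=> j; rewrite /sorted_len /G; apply: leq_bigmax.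
- by rewrite leq_add // leq_mul // ltnW.
Qed.

(* [inord] truncates silently: [encode K x] is meaningful only when all
   placements of [x] are at most [K]. *)
Definition encode K {B} (x : 'S_n * {ffun 'I_n -> 'I_B}) : {ffun 'I_n -> 'I_K.+1} :=
  [ffun i => inord (placement x i)].

Lemma encodeE K B (x : 'S_n * {ffun 'I_n -> 'I_B}) :
  (forall i, placement x i <= K)%N -> forall i, encode K x i = placement x i :> nat.
Proof. by move=> le_K i; rewrite ffunE inordK // ltnS. Qed.

Lemma encode_inj K B (A : {pred 'S_n * {ffun 'I_n -> 'I_B}}) :
  {in A, forall x i, placement x i <= K}%N -> {in A &, injective (encode K)}.
Proof.
move=> le_K [sg e] [tau f] /le_K xK /le_K yK /ffunP enc.
have [-> ef] : sg = tau /\ (fun j => e j : nat) =1 (fun j => f j).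
  apply: place_inj => i; rewrite -[LHS]/(placement (sg, e) i) -[RHS]/(placement (tau, f) i).
  by rewrite -(encodeE xK) -(encodeE yK) enc.
by congr pair; apply/ffunP => j; apply: val_inj; apply: ef.
Qed.

Lemma sum_mass_encode K B (A : {pred 'S_n * {ffun 'I_n -> 'I_B}}) :
  {in A, forall x i, placement x i <= K}%N ->
  \sum_(x in A) mass (placement x) = \sum_(s in encode K @: A) mass (fun i => s i).
Proof.
move=> le_K.
rewrite (big_imset (fun s : {ffun 'I_n -> 'I_K.+1} => mass (fun i => s i)) (encode_inj le_K)).
by apply: eq_bigr => x xA; apply: eq_mass => i; rewrite encodeE //; apply: le_K.
Qed.

Definition mass_gaps_lt B : rat :=
  \sum_(sg : 'S_n) weight sg * \prod_(j < n) \sum_(t < B) ratio j ^+ t.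

Lemma sum_mass_placement B :
  \sum_(x : 'S_n * {ffun 'I_n -> 'I_B}) mass (placement x) = mass_gaps_lt B.
Proof.
rewrite -(pair_big xpredT xpredT (fun sg e => mass (placement (sg, e)))) /=.
apply: eq_bigr => sg _; rewrite bigA_distr_bigA mulr_sumr.
by apply: eq_bigr => e _; rewrite mass_place.
Qed.

Lemma mass_gaps_lt_le_probA_partial B K :
  (n * (B + (\max_(i < n) gamma i).+1) <= K)%N -> mass_gaps_lt B <= probA_partial gamma K.+1.
Proof.
move=> BK; pose A := [pred x : 'S_n * {ffun 'I_n -> 'I_B} | true].
have le_K : {in A, forall x i, placement x i <= K}%N.
  by move=> x _ i; apply: leq_trans (placement_le x i) BK.
rewrite -sum_mass_placement (eq_bigl (fun x => x \in A)) // (sum_mass_encode le_K).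
apply: ler_sum_subpred => [s /imsetP [x _ ->] | s _]; last exact: mass_ge0.
by rewrite (eq_intervals_disjoint _ (encodeE (le_K x isT))) place_disjoint.
Qed.

Lemma probA_partial_le_mass_gaps_lt K : probA_partial gamma K.+1 <= mass_gaps_lt K.+1.
Proof.
pose A := [pred x : 'S_n * {ffun 'I_n -> 'I_K.+1} | [forall i, placement x i <= K]%N].
have le_K : {in A, forall x i, placement x i <= K}%N by move=> x /forallP.
rewrite -sum_mass_placement.
apply: (@le_trans _ _ (\sum_(x in A) mass (placement x))); last first.
  by apply: ler_sum_subpred => // x _; apply: mass_ge0.
rewrite (sum_mass_encode le_K); apply: ler_sum_subpred => [s disj | s _]; last exact: mass_ge0.
have [sg sorted] := exists_sorting_perm (intervals_disjoint_inj disj).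
pose e : {ffun 'I_n -> 'I_K.+1} := [ffun j => inord (sorted_gaps (fun i => s i) sg j)].
have eE : (fun j : 'I_n => e j : nat) =1 sorted_gaps (fun i => s i) sg.
  move=> j; rewrite ffunE inordK // ltnS.
  by apply: leq_trans (sorted_gaps_le _ _ _) _; rewrite -ltnS.
have placeE : placement (sg, e) =1 (fun i => s i) := place_sorted_gaps disj sorted eE.
have eA : (sg, e) \in A.
  by apply/forallP => i; have -> : placement (sg, e) i = s i := placeE i; rewrite -ltnS.
apply/imsetP; exists (sg, e) => //; apply/ffunP => i; apply: ord_inj.
by rewrite encodeE; [exact: esym (placeE i) | exact: le_K].
Qed.

Definition probA_limit : rat := \sum_(sg : 'S_n) weight sg * \prod_(j < n) (1 - ratio j)^-1.

Lemma ratio_gt0 j : 0 < ratio j.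
Proof. exact: exprn_gt0 half_gt0. Qed.

Lemma ratio_lt1 j : ratio j < 1.
Proof. by rewrite exprn_ilt1 ?(ltW half_gt0) ?half_lt1 // subn_eq0 -ltnNge. Qed.

Lemma geometric_ratio_bounds j B :
  0 <= \sum_(t < B) ratio j ^+ t <= (1 - ratio j)^-1.
Proof.
rewrite sumr_ge0 => [|t _]; last by rewrite exprn_ge0 // ltW // ratio_gt0.
rewrite geometric_sum ?lt_eqF ?ratio_lt1 // ler_piMl //.
  by rewrite invr_ge0 subr_ge0 ltW // ratio_lt1.
by rewrite gerBl exprn_ge0 // ltW // ratio_gt0.
Qed.

Lemma weight_ge0 sg : 0 <= weight sg.
Proof. by rewrite exprn_ge0 // invr_ge0 ler0n. Qed.

Lemma probA_limit_ge0 : 0 <= probA_limit.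
Proof.
apply: sumr_ge0 => sg _; rewrite mulr_ge0 ?weight_ge0 //.
by apply: prodr_ge0 => j _; rewrite invr_ge0 subr_ge0 ltW ?ratio_lt1.
Qed.

Lemma mass_gaps_lt_le_probA_limit B : mass_gaps_lt B <= probA_limit.
Proof.
apply: ler_sum => sg _; rewrite ler_wpM2l ?weight_ge0 //.
by apply: ler_prod => j _; apply: geometric_ratio_bounds.
Qed.

Lemma probA_limit_sub_mass_gaps_lt B :
  probA_limit - mass_gaps_lt B <= probA_limit * n%:R * half ^+ B.
Proof.
rewrite /probA_limit /mass_gaps_lt -sumrB -mulrA mulr_suml; apply: ler_sum => sg _.
rewrite -mulrBr -mulrA ler_wpM2l ?weight_ge0 //.
under [X in _ - X]eq_bigr => j _ do rewrite geometric_sum ?lt_eqF ?ratio_lt1 //.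
rewrite big_split /= -{1}[\prod_j _^-1]mul1r -mulrBl mulrC ler_wpM2l //.
  by apply: prodr_ge0 => j _; rewrite invr_ge0 subr_ge0 ltW ?ratio_lt1.
apply: le_trans (one_sub_prod_le_sum _ _) _ => [j|].
  by rewrite exprn_ge0 ?exprn_ile1 // ltW ?ratio_gt0 ?ratio_lt1.
apply: (@le_trans _ _ (\sum_(j < n) half ^+ B)); last by rewrite sumr_const card_ord mulr_natl.
apply: ler_sum => j _.
by rewrite -exprM ler_wiXn2l ?(ltW half_gt0) ?(ltW half_lt1) // leq_pmull // subn_gt0.
Qed.

Lemma probA_partial_converges : converges_to (probA_partial gamma) probA_limit.
Proof.
apply: (@converges_to_squeeze _ _ (probA_limit * n%:R)) => B B_gt0.
exists (n * (B + (\max_(i < n) gamma i).+1)).+1 => -[|K] //; rewrite ltnS => le_K.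
rewrite (le_trans (probA_partial_le_mass_gaps_lt K)) ?mass_gaps_lt_le_probA_limit ?andbT //.
apply: le_trans (mass_gaps_lt_le_probA_partial le_K); rewrite lerBlDr -lerBlDl.
apply: le_trans (probA_limit_sub_mass_gaps_lt B) _.
by rewrite ler_wpM2l ?half_expn_le // mulr_ge0 ?probA_limit_ge0.
Qed.

Lemma prod_inv_one_sub_ratio : \prod_(j < n) (1 - ratio j)^-1 = c n.
Proof.
rewrite prodfV /c -(big_mkord xpredT (fun j => 1 - half ^+ (n - j))).
rewrite big_nat_recr //= subSnn expr1 big_add1 /= invfM mulrC.
have -> : (1 - half)^-1 = 2%:R by rewrite (_ : 1 - half = half) ?invrK //; field.
by congr (_ / _); apply: eq_bigr => i _; rewrite subSS exprVn.
Qed.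

Lemma weightE sg : weight sg = 2%:R ^- 'C(n.+1, 2) *
  \prod_(i : 'I_n | (i.+1 < n)%N) 2%:R ^- ((n - i.+1) * gamma (sg i)).
Proof.
rewrite /weight exprD exprVn -prodrXr [in RHS]big_mkcond; congr (_ * _).
apply: eq_bigr => i _; rewrite subSS exprVn; case: ifP => // /negbT.
rewrite ltnS -ltnNge ltnS => m_le_i.
by rewrite (eqP (_ : m - i == 0)%N) ?mul0n ?expr0 // subn_eq0.
Qed.

Lemma probA_limitE : probA_limit = c n * 2%:R ^- 'C(n.+1, 2) *
  \sum_(sg : 'S_n) \prod_(i : 'I_n | (i.+1 < n)%N) 2%:R ^- ((n - i.+1) * gamma (sg i)).
Proof.
rewrite /probA_limit prod_inv_one_sub_ratio -mulrA !mulr_sumr.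
by apply: eq_bigr => sg _; rewrite weightE mulrC.
Qed.

End Configurations.

Lemma sum_half_pow k : \sum_(1 <= i < k.+1) half ^+ (k.+2 - i) = half - half ^+ k.+1.
Proof.
elim: k => [|k IH]; first by rewrite big_geq // expr1 subrr.
rewrite big_nat_recr //= (eq_big_nat _ _ (F2 := fun i => half * half ^+ (k.+2 - i))).
  rewrite -mulr_sumr IH (_ : k.+3 - k.+1 = 2)%N; last by rewrite subSS -addn2 addKn.
  by rewrite mulrBr -exprS addrAC; congr (_ - _).
by move=> i /andP [_ ik]; rewrite -exprS -subSn // (leqW (ltnW ik)).
Qed.

Lemma c_denominator_bounds n :
  half <= \prod_(1 <= i < n) (1 - (2%:R : rat) ^- (n.+1 - i)) <= 1.
Proof.
have pow01 k : 0 <= (2%:R : rat) ^- k <= 1.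
  by rewrite -exprVn exprn_ge0 ?exprn_ile1 ?(ltW half_gt0) ?(ltW half_lt1).
apply/andP; split; last first.
  apply: prodr_ile1 => i _; have /andP [p0 p1] := pow01 (n.+1 - i)%N.
  by rewrite subr_ge0 p1 gerBl.
have sum_le : \sum_(1 <= i < n) (2%:R : rat) ^- (n.+1 - i) <= half.
  case: n => [|k]; first by rewrite big_geq // ltW ?half_gt0.
  under eq_bigr => i _ do rewrite -exprVn.
  by rewrite sum_half_pow gerBl exprn_ge0 // ltW ?half_gt0.
have := one_sub_prod_le_sum (index_iota 1 n) (fun i => pow01 (n.+1 - i)%N).
move=> /le_trans /(_ sum_le).
set P := \prod_(_ <= _ < _ | _) _; clearbody P; lra.
Qed.

Lemma c_bounds n : 2%:R <= c n <= 4%:R.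
Proof.
have /andP [P_ge P_le] := c_denominator_bounds n.
rewrite /c; set P := \prod_(_ <= _ < _ | _) _ in P_ge P_le *; clearbody P.
have P_gt0 : 0 < P by lra.
by rewrite ler_pdivlMr // ler_pdivrMr //; apply/andP; split; lra.
Qed.

Lemma c2 : c 2 = 8%:R / 3%:R.
Proof. by rewrite /c big_nat1 /= -exprVn; field. Qed.

Theorem corollary1 :
  (forall (n : nat) (gamma : 'I_n -> nat), (1 <= n)%N ->
     converges_to (probA_partial gamma)
       (c n * (2%:R : rat) ^- 'C(n.+1, 2) *
        \sum_(sigma : 'S_n)
           \prod_(i : 'I_n | (i.+1 < n)%N)
              (2%:R : rat) ^- ((n - i.+1) * gamma (sigma i))))
  /\ (forall n : nat, (2%:R : rat) <= c n <= 4%:R)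
  /\ c 2 = 8%:R / 3%:R.
Proof.
split; last by split; [exact: c_bounds | exact: c2].
by move=> [|m] gamma // _; rewrite -probA_limitE; apply: probA_partial_converges.
Qed.
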